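(* Let $\mathbb{F}$ be a field of characteristic different from $2$ and $G\leq\mathrm{GL}_n(\mathbb{F})$ a reflection group acting on $V=\mathbb{F}^n$. If $\omega_1,\dots,\omega_n$ are $G$-invariant differential $1$-forms, then $Q(\tilde{\mathcal A})\,Q_{\det}$ divides $\omega_1\wedge\cdots\wedge\omega_n$, i.e. $\omega_1\wedge\cdots\wedge\omega_n=f\,dz_1\wedge\cdots\wedge dz_n$ with $f\in\mathbb{F}[V]$ divisible by $Q(\tilde{\mathcal A})\,Q_{\det}$.
   Context: $\mathbb{F}[V]=S(V^* )$; $z_1,\dots,z_n$ is a basis of $V^*$; $\Omega^1=\mathbb{F}[V]\otimes V^*$ and $\Omega^n=\mathbb{F}[V]\,dz_1\wedge\cdots\wedge dz_n$, with $G$ acting on $V^*$ by $(gf)(v)=f(g^{-1}v)$ and diagonally on forms. A reflection is a finite-order element of $\mathrm{GL}(V)$ whose fixed space is a hyperplane; a reflection group is a finite group generated by reflections. For a hyperplane $H$ with defining linear form $l_H$, a reflection $s$ about $H$ satisfies $s(v)=v+l_H(v)\alpha_s$ (root vector $\alpha_s$); it is a transvection if $\alpha_s\in H$. $\mathcal A$ is the set of reflecting hyperplanes of reflections in $G$. For $H\in\mathcal A$: $G_H$ is the pointwise stabilizer of $H$ in $G$, $K_H=\ker(\det|_{G_H})$, $e_H=|G_H:K_H|$, and $b_H$ is the dimension of the span of the root vectors of transvections in $G_H$. Define $Q_{\det}=\prod_{H\in\mathcal A}l_H^{e_H-1}$ and $Q(\tilde{\mathcal A})=\prod_{H\in\mathcal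 A}l_H^{e_Hb_H}$. *)

From HB Require Import structures.
From mathcomp Require Import all_boot all_order all_algebra all_fingroup.
From mathcomp Require Import mxrepresentation.
From mathcomp Require Import mpoly.
Set Implicit Arguments. Unset Strict Implicit. Unset Printing Implicit Defensive.
Import GRing.Theory.
Local Open Scope ring_scope.

(* Conventions.  V = F^n is realised as row vectors 'rV[F]_n; a matrix
   M : 'M[F]_n acts on V by v |-> v *m M.  F[V] = {mpoly F[n]}, with
   z_i = 'X_i the i-th coordinate function. *)

Section Defs.
Variables (F : fieldType) (n : nat).

Definition lin_poly (u : 'cV[F]_n) : {mpoly F[n]} :=
  \sum_(j < n) u j 0 *: 'X_j.

(* (g f)(v) = f(g^{-1} v) : substitute z_i |-> z_i o g^{-1} *)
Definition act_poly (M : 'M[F]_n) (p : {mpoly F[n]}) : {mpoly F[n]} :=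
  p \mPo [tuple lin_poly (col i (invmx M)) | i < n].

(* 1-forms: omega = sum_i omega_i dz_i, stored as the row of coefficients *)
Definition form1 := 'rV[{mpoly F[n]}]_n.

(* diagonal action: g(sum_i a_i dz_i) = sum_i (g a_i) d(g z_i),
   with d(g z_i) = sum_j (g^{-1})_{j i} dz_j *)
Definition act_form (M : 'M[F]_n) (w : form1) : form1 :=
  \row_j \sum_(i < n) act_poly M (w 0 i) * (invmx M j i)%:MP.

(* omega_1 /\ ... /\ omega_n = wedge_coef omega * dz_1 /\ ... /\ dz_n *)
Definition wedge_coef (w : 'I_n -> form1) : {mpoly F[n]} :=
  \det (\matrix_(k < n, i < n) w k 0 i).

Definition mdvd (p q : {mpoly F[n]}) : Prop := exists r, q = r * p.

(* reflection (for an element of a finite group, where finite order is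
   automatic): the fixed space {v | v *m M = v} = kernel of M - 1 is a
   hyperplane, i.e. M - 1 has rank 1 *)
Definition is_reflection (M : 'M[F]_n) : bool := \rank (M - 1%:M) == 1%N.

Definition fixspace (M : 'M[F]_n) : 'M[F]_n := kermx (M - 1%:M).

(* transvection: reflection whose root vector (spanning the image of M - 1)
   lies in the reflecting hyperplane *)
Definition is_transvection (M : 'M[F]_n) : bool :=
  is_reflection M && (M - 1%:M <= fixspace M)%MS.

Variables (gT : finGroupType) (G : {group gT}) (rG : mx_representation F G n).

Definition reflections : {set gT} :=
  [set g in G | is_reflection (rG g)].

(* the set A of reflecting hyperplanes, each represented by the canonical
   square matrix <<H>> whose row space is H *)
Definition hyperplanes : seq 'M[F]_n :=
  undup [seq <<fixspace (rG g)>>%MS | g <- enum reflections].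

Definition ptstab (H : 'M[F]_n) : {set gT} :=
  [set g in G | H *m rG g == H].
Definition ptstab_det1 (H : 'M[F]_n) : {set gT} :=
  [set g in ptstab H | \det (rG g) == 1].
Definition e_H (H : 'M[F]_n) : nat := (#|ptstab H : ptstab_det1 H|)%g.
Definition b_H (H : 'M[F]_n) : nat :=
  \rank (\sum_(g in ptstab H | is_transvection (rG g)) (rG g - 1%:M))%MS.

Definition Q_det (l : 'M[F]_n -> 'cV[F]_n) : {mpoly F[n]} :=
  \prod_(H <- hyperplanes) lin_poly (l H) ^+ (e_H H).-1.
Definition Q_tA (l : 'M[F]_n -> 'cV[F]_n) : {mpoly F[n]} :=
  \prod_(H <- hyperplanes) lin_poly (l H) ^+ (e_H H * b_H H).

End Defs.

(* Since distinct hyperplanes have non-proportional linear forms l_H, which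
   are primes of F[V], it suffices to show that l_H^(e_H b_H + e_H - 1)
   divides the coefficient f of omega_1 /\ ... /\ omega_n for each H.
   Every g in G_H is 1 + u w with u the coefficient column of l_H, so g acts
   on l_H by det(g)^-1, fixes every polynomial modulo l_H, and multiplies f by det(g).
   The values of det on G_H form the group of e_H-th roots of unity; hence a
   G_H-invariant multiple of l_H is a multiple of l_H^e_H, and the exponent of
   l_H in f is congruent to -1 modulo e_H.  For a transvection g in G_H and a
   row y of g - 1 (a root vector), omega_k(y) = g(omega_k(e_i)) - omega_k(e_i)
   is such an invariant multiple.  Choosing a basis whose first b_H vectors
   span the root vectors gives b_H columns divisible by l_H^e_H, so
   l_H^(e_H b_H) divides f, and the congruence adds e_H - 1 further factors. *)

From HB Require Import structures.
From mathcomp Require Import all_boot all_order all_algebra all_fingroup.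
From mathcomp Require Import mxrepresentation.
From mathcomp Require Import mpoly.
From mathcomp Require Import ring zify.
Set Implicit Arguments. Unset Strict Implicit. Unset Printing Implicit Defensive.
Import GRing.Theory.
Local Open Scope ring_scope.

Lemma nat_ind_between (P : nat -> Prop) a b :
  (a <= b)%N -> P a -> (forall k, (a <= k < b)%N -> P k -> P k.+1) -> P b.
Proof.
move=> le_ab Pa P_step; elim: b le_ab P_step => [|b IHb].
  by rewrite leqn0 => /eqP<-.
rewrite leq_eqVlt => /predU1P[<- //|lt_ab] P_step.
apply: (P_step); first by rewrite -ltnS lt_ab /=.
by apply: IHb => // k /andP[le_ak lt_kb]; apply: P_step; rewrite le_ak ltnW.
Qed.

Section Divisibility.
Variables (F : fieldType) (n : nat).
Implicit Types (d p q r : {mpoly F[n]}).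

Lemma mdvd0 d : mdvd d 0. Proof. by exists 0; rewrite mul0r. Qed.

Lemma mdvd_refl d : mdvd d d. Proof. by exists 1; rewrite mul1r. Qed.

Lemma mdvd_trans d p q : mdvd d p -> mdvd p q -> mdvd d q.
Proof. by move=> [r ->] [s ->]; exists (s * r); rewrite mulrA. Qed.

Lemma mdvdD d p q : mdvd d p -> mdvd d q -> mdvd d (p + q).
Proof. by move=> [r ->] [s ->]; exists (r + s); rewrite mulrDl. Qed.

Lemma mdvdN d p : mdvd d p -> mdvd d (- p).
Proof. by move=> [r ->]; exists (- r); rewrite mulNr. Qed.

Lemma mdvd_mull d p q : mdvd d p -> mdvd d (q * p).
Proof. by move=> [r ->]; exists (q * r); rewrite mulrA. Qed.

Lemma mdvd_mulr d p q : mdvd d p -> mdvd d (p * q).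
Proof. by rewrite mulrC; apply: mdvd_mull. Qed.

Lemma mdvdZ d p c : mdvd d p -> mdvd d (c *: p).
Proof. by rewrite -mul_mpolyC; apply: mdvd_mull. Qed.

Lemma mdvd_sum (I : Type) (s : seq I) (P : pred I) (f : I -> {mpoly F[n]}) d :
  (forall i, P i -> mdvd d (f i)) -> mdvd d (\sum_(i <- s | P i) f i).
Proof. by move=> dvd_f; elim/big_ind: _ => //; [apply: mdvd0 | apply: mdvdD]. Qed.

Lemma mdvd_mul2l d p q : d != 0 -> mdvd (d * p) (d * q) -> mdvd p q.
Proof. by move=> nz_d [r]; rewrite mulrCA => /(mulfI nz_d) ->; exists r. Qed.

Lemma mdvd_prod_sub (I : Type) (s : seq I) (f g : I -> {mpoly F[n]}) d :
  (forall i, mdvd d (f i - g i)) ->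
  mdvd d (\prod_(i <- s) f i - \prod_(i <- s) g i).
Proof.
move=> dvd_fg; elim: s => [|i s IHs]; first by rewrite !big_nil subrr; apply: mdvd0.
rewrite !big_cons.
have -> : f i * \prod_(j <- s) f j - g i * \prod_(j <- s) g j
        = (f i - g i) * \prod_(j <- s) f j
          + g i * (\prod_(j <- s) f j - \prod_(j <- s) g j) by ring.
by apply: mdvdD; [apply: mdvd_mulr | apply: mdvd_mull].
Qed.

Lemma mdvd_comp_sub (t : n.-tuple {mpoly F[n]}) d :
  (forall i, mdvd d (tnth t i - 'X_i)) -> forall p, mdvd d (p \mPo t - p).
Proof.
move=> dvd_t p; rewrite comp_mpolyE [X in _ - X]mpolyE -sumrB.
apply: mdvd_sum => m _; rewrite -scalerBr mpolyXE_id; apply/mdvdZ/mdvd_prod_sub.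
by move=> i; rewrite subrXX; apply/mdvd_mulr/dvd_t.
Qed.

End Divisibility.

Section LinearForms.
Variables (F : fieldType) (n : nat).
Implicit Types (u v : 'cV[F]_n) (p q r : {mpoly F[n]}).

Fact lin_poly_is_linear : linear (@lin_poly F n).
Proof.
move=> c u v; rewrite /lin_poly scaler_sumr -big_split; apply: eq_bigr => j _.
by rewrite !mxE scalerDl scalerA.
Qed.

HB.instance Definition _ :=
  GRing.isLinear.Build F 'cV[F]_n {mpoly F[n]} _ (@lin_poly F n)
    lin_poly_is_linear.

Lemma mcoeff_lin_poly u j : (lin_poly u)@_U_(j) = u j 0.
Proof.
rewrite /lin_poly raddf_sum (bigD1 j) //= big1 => [|i ne_ij].
  by rewrite mcoeffZ mcoeffXU eqxx mulr1 addr0.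
by rewrite mcoeffZ mcoeffXU (negbTE ne_ij) mulr0.
Qed.

Lemma lin_poly_inj : injective (@lin_poly F n).
Proof.
move=> u v eq_uv; apply/matrixP => i k; rewrite (ord1 k).
by rewrite -!mcoeff_lin_poly eq_uv.
Qed.

Lemma lin_poly_eq0 u : (lin_poly u == 0) = (u == 0).
Proof. by rewrite -(linear0 (@lin_poly F n)) (inj_eq lin_poly_inj). Qed.

Lemma lin_poly_col1 (i : 'I_n) : lin_poly (col i (1%:M : 'M[F]_n)) = 'X_i.
Proof.
rewrite /lin_poly (bigD1 i) //= big1 => [|j ne_ji]; last first.
  by rewrite !mxE (negbTE ne_ji) scale0r.
by rewrite !mxE eqxx scale1r addr0.
Qed.

Lemma comp_lin_poly (t : n.-tuple {mpoly F[n]}) v :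
  lin_poly v \mPo t = \sum_(j < n) v j 0 *: tnth t j.
Proof.
rewrite /lin_poly raddf_sum; apply: eq_bigr => j _.
by rewrite /= comp_mpolyZ comp_mpolyXU -tnth_nth.
Qed.

HB.instance Definition _ (M : 'M[F]_n) :=
  GRing.LRMorphism.copy (act_poly M)
    (comp_mpoly [tuple lin_poly (col i (invmx M)) | i < n]).

Lemma act_polyC (M : 'M[F]_n) c : act_poly M c%:MP = c%:MP.
Proof. exact: comp_mpolyC. Qed.

Lemma act_lin_poly (M : 'M[F]_n) v :
  act_poly M (lin_poly v) = lin_poly (invmx M *m v).
Proof.
have -> : invmx M *m v = \sum_(j < n) v j 0 *: col j (invmx M).
  apply/matrixP => i k; rewrite (ord1 k) mxE summxE.
  by apply: eq_bigr => j _; rewrite !mxE mulrC.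
rewrite /act_poly comp_lin_poly linear_sum; apply: eq_bigr => j _.
by rewrite tnth_mktuple linearZ.
Qed.

Lemma exists_col_neq0 u : u != 0 -> exists j, u j 0 != 0.
Proof.
move=> nz_u; apply/existsP; apply: contraR nz_u; rewrite negb_exists.
move=> /forallP u0; apply/eqP/matrixP => i k; rewrite (ord1 k) mxE.
exact/eqP/negPn/u0.
Qed.

(* The linear form l = lin_poly u is prime: the substitution
   z_j0 |-> z_j0 - l / u_j0 is a ring morphism onto a copy of F[z_i, i != j0]
   whose kernel is exactly (l). *)
Section PrimeLinearForm.
Variables (u : 'cV[F]_n) (j0 : 'I_n).
Hypothesis nz_uj0 : u j0 0 != 0.
Local Notation l := (lin_poly u).

Definition kill_lin : n.-tuple {mpoly F[n]} :=
  [tuple if i == j0 then 'X_i - (u j0 0)^-1 *: l else 'X_i | i < n].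

Lemma comp_kill_lin v :
  lin_poly v \mPo kill_lin = lin_poly (v - (v j0 0 / u j0 0) *: u).
Proof.
have lin_v : lin_poly v = v j0 0 *: 'X_j0 + \sum_(i < n | i != j0) v i 0 *: 'X_i.
  by rewrite /lin_poly (bigD1 j0).
rewrite comp_lin_poly linearB linearZ (bigD1 j0) //= tnth_mktuple eqxx lin_v.
rewrite (eq_bigr (fun i => v i 0 *: 'X_i)) => [|i ne_ij0]; last first.
  by rewrite tnth_mktuple (negbTE ne_ij0).
by rewrite scalerBr scalerA mulrC addrAC.
Qed.

Lemma comp_kill_lin_self : l \mPo kill_lin = 0.
Proof. by rewrite comp_kill_lin divff // scale1r subrr linear0. Qed.

Lemma mdvd_linP p : mdvd l p <-> p \mPo kill_lin = 0.
Proof.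
split => [[r ->]|p_killed]; first by rewrite rmorphM /= comp_kill_lin_self mulr0.
have := @mdvd_comp_sub _ _ kill_lin l _ p; rewrite p_killed sub0r => /(_ _)/mdvdN.
rewrite opprK; apply => i; rewrite tnth_mktuple.
case: eqP => _; last by rewrite subrr; apply: mdvd0.
by rewrite addrAC subrr add0r; apply/mdvdN/mdvdZ/mdvd_refl.
Qed.

Lemma mdvd_lin_mul p q : mdvd l (p * q) -> mdvd l p \/ mdvd l q.
Proof.
rewrite !mdvd_linP rmorphM /= => /eqP.
by rewrite mulf_eq0 => /orP[/eqP-> | /eqP->]; [left | right].
Qed.

Lemma mdvd_lin_exp_mull q r k :
  ~ mdvd l q -> mdvd (l ^+ k) (q * r) -> mdvd (l ^+ k) r.
Proof.
have nz_l : l != 0 by rewrite lin_poly_eq0; apply: contraNneq nz_uj0 => ->; rewrite mxE.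
move=> ndvd_q; elim: k r => [|k IHk] r; first by exists r; rewrite mulr1.
move=> dvd_qr; have [r1 def_r] : mdvd (l ^+ k) r.
  by apply: IHk; apply: mdvd_trans dvd_qr; exists l; rewrite exprS mulrC.
have : mdvd (l ^+ k * l) (l ^+ k * (q * r1)).
  by case: dvd_qr => s; rewrite def_r exprSr => eq_s; exists s; rewrite -eq_s; ring.
move/(mdvd_mul2l (expf_neq0 k nz_l))/mdvd_lin_mul => [//|[r2 def_r1]].
by exists r2; rewrite def_r def_r1 exprSr; ring.
Qed.

End PrimeLinearForm.

End LinearForms.

Section ProductOfLinearForms.
Variables (F : fieldType) (n : nat) (T : eqType) (L : T -> 'cV[F]_n).

Lemma mdvd_prod_lin_exp (s : seq T) (k : T -> nat) (f : {mpoly F[n]}) :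
  uniq s -> {in s, forall x, L x != 0} ->
  {in s &, forall x y, x != y -> forall c, L y != c *: L x} ->
  {in s, forall x, mdvd (lin_poly (L x) ^+ k x) f} ->
  mdvd (\prod_(x <- s) lin_poly (L x) ^+ k x) f.
Proof.
elim: s => [|x s IHs] /=; first by exists f; rewrite big_nil mulr1.
case/andP=> s'x uniq_s nz_L nprop_L dvd_f; rewrite big_cons.
have [r def_f] : mdvd (\prod_(y <- s) lin_poly (L y) ^+ k y) f.
  apply: IHs => // [y s_y | y z s_y s_z | y s_y].
  - by apply: nz_L; rewrite inE s_y orbT.
  - by apply: nprop_L; rewrite inE ?s_y ?s_z orbT.
  - by apply: dvd_f; rewrite inE s_y orbT.
have [j0 nz_xj0] := exists_col_neq0 (nz_L x (mem_head x s)).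
have ndvd_prod : ~ mdvd (lin_poly (L x)) (\prod_(y <- s) lin_poly (L y) ^+ k y).
  rewrite (mdvd_linP nz_xj0) rmorph_prod /=; apply/eqP.
  rewrite prodf_seq_neq0; apply/allP => y s_y /=.
  rewrite rmorphXn /= expf_neq0 // comp_kill_lin lin_poly_eq0 subr_eq0.
  by apply: nprop_L; rewrite ?inE ?s_y ?eqxx ?orbT //; apply: contraNneq s'x => ->.
have [r1 def_r] : mdvd (lin_poly (L x) ^+ k x) r.
  apply: (mdvd_lin_exp_mull nz_xj0 ndvd_prod).
  by rewrite mulrC -def_f; apply: dvd_f; apply: mem_head.
by exists r1; rewrite def_f def_r; ring.
Qed.

End ProductOfLinearForms.

Section Matrices.
Variables (F : fieldType) (n : nat).
Implicit Types (u : 'cV[F]_n) (w : 'rV[F]_n).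

Lemma det_unitmx_neq0 (M : 'M[F]_n) : M \in unitmx -> \det M != 0.
Proof. by rewrite unitmxE unitfE. Qed.

Lemma kermx_col_factor u (B : 'M[F]_n) :
  u != 0 -> (kermx u <= kermx B)%MS -> exists w, B = u *m w.
Proof.
move=> /exists_col_neq0[j0 nz_uj0] sub_ker.
pose a : 'rV[F]_n := (u j0 0)^-1 *: delta_mx 0 j0.
have au : a *m u = 1%:M.
  apply/matrixP => i k; rewrite !ord1 -scalemxAl -rowE !mxE.
  by rewrite mulVf.
have : (1%:M - u *m a <= kermx B)%MS.
  apply: submx_trans sub_ker; apply/sub_kermxP.
  by rewrite mulmxBl mul1mx -mulmxA au mulmx1 subrr.
move/sub_kermxP; rewrite mulmxBl mul1mx => /eqP; rewrite subr_eq0 => /eqP->.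
by exists (a *m B); rewrite mulmxA.
Qed.

(* the matrix determinant lemma, via a block factorisation *)
Lemma det_rank1 u w : \det (1%:M + u *m w) = 1 + (w *m u) 0 0.
Proof.
pose B := block_mx (1%:M : 'M_n) (- u) w (1%:M : 'M_1).
have B_lu : B = block_mx 1%:M 0 w 1%:M *m block_mx 1%:M (- u) 0 (1%:M + w *m u).
  rewrite mulmx_block !mul1mx !mul0mx !mulmx1 !addr0.
  by rewrite mulmxN addrCA addNr addr0.
have B_ul : B = block_mx (1%:M + u *m w) (- u) 0 1%:M *m block_mx 1%:M 0 w 1%:M.
  rewrite mulmx_block !mul1mx !mul0mx !mulmx1 !mulmx0 ?addr0 ?add0r.
  by rewrite mulNmx addrK.
have := congr1 determinant B_lu; rewrite B_ul !det_mulmx !det_lblock !det_ublock.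
by rewrite !det1 !mul1r !mulr1 det_mx11 !mxE eqxx mulr1n => ->.
Qed.

Lemma row_ebase_sub m (A : 'M[F]_(m, n)) (j : 'I_n) :
  (j < \rank A)%N -> (row j (row_ebase A) <= A)%MS.
Proof.
move=> lt_jr; rewrite -(eq_row_base A).
have -> : row j (row_ebase A) = row (Ordinal lt_jr) (row_base A).
  apply/matrixP => z c; rewrite !mxE (bigD1 j) //= big1 => [|q ne_qj].
    by rewrite !mxE eqxx lt_jr mul1r addr0.
  by rewrite !mxE /= eq_sym (negbTE ne_qj : (q == j :> nat) = false) mul0r.
exact: row_sub.
Qed.

Lemma kermx_scale u c : (kermx u <= kermx (c *: u))%MS.
Proof. by apply/sub_kermxP; rewrite -scalemxAr mulmx_ker scaler0. Qed.

End Matrices.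

Section FixingAHyperplane.
Variables (F : fieldType) (n : nat) (u : 'cV[F]_n) (M : 'M[F]_n).
Hypotheses (unit_M : M \in unitmx) (nz_u : u != 0)
  (fix_M : (kermx u <= kermx (M - 1%:M))%MS).
Local Notation l := (lin_poly u).

Lemma invmx_mul_fix_col : invmx M *m u = (\det M)^-1 *: u.
Proof.
have [w def_M1] := kermx_col_factor nz_u fix_M.
have def_M : M = 1%:M + u *m w by rewrite -def_M1 addrC subrK.
have Mu : M *m u = \det M *: u.
  rewrite {1}def_M mulmxDl mul1mx -mulmxA [w *m u]mx11_scalar mul_mx_scalar.
  by rewrite def_M det_rank1 scalerDl scale1r.
apply: (canRL (scalerK (det_unitmx_neq0 unit_M))).
by rewrite scalemxAr -Mu mulKmx.
Qed.

Lemma act_poly_fix_lin : act_poly M l = (\det M)^-1 *: l.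
Proof. by rewrite act_lin_poly invmx_mul_fix_col linearZ. Qed.

Lemma mdvd_act_fix_sub p : mdvd l (act_poly M p - p).
Proof.
have fix_invM : (kermx u <= kermx (invmx M - 1%:M))%MS.
  apply/sub_kermxP; have /sub_kermxP := fix_M.
  rewrite !mulmxBr !mulmx1 => /eqP; rewrite subr_eq0 => /eqP x_fix.
  by rewrite -{1}x_fix mulmxK // subrr.
have [w def_invM1] := kermx_col_factor nz_u fix_invM.
apply: mdvd_comp_sub => i; rewrite tnth_mktuple -lin_poly_col1 -linearB /=.
have -> : col i (invmx M) - col i 1%:M = w 0 i *: u.
  apply/matrixP => k z; rewrite (ord1 z).
  have := congr1 (fun A : 'M[F]_n => A k i) def_invM1.
  by rewrite !mxE big_ord1 mulrC => ->.
by rewrite linearZ; apply/mdvdZ/mdvd_refl.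
Qed.

Lemma transvection_mul_col : is_transvection M -> (M - 1%:M) *m u = 0.
Proof.
case/andP => _ /sub_kermxP; rewrite /fixspace.
have [w ->] := kermx_col_factor nz_u fix_M; set a := (w *m u) 0 0.
have uwu : u *m w *m u = a *: u.
  by rewrite -mulmxA [w *m u]mx11_scalar mul_mx_scalar.
rewrite mulmxA; rewrite uwu -scalemxAl => /eqP.
by rewrite scaler_eq0 => /orP[/eqP-> | /eqP uw0]; rewrite ?scale0r // -uwu uw0 mul0mx.
Qed.

(* Peeling off one more factor l from a semi-invariant: l^k | p gives
   M p = (det M)^-k (M (p / l^k)) l^k, and M (p / l^k) is p / l^k mod l. *)
Lemma mdvd_exp_semi_invariant p c k :
  act_poly M p = c *: p -> mdvd (l ^+ k) p -> (\det M)^-1 ^+ k != c ->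
  mdvd (l ^+ k.+1) p.
Proof.
move=> semi_p [q def_p] ne_c.
have nz_l : l != 0 by rewrite lin_poly_eq0.
have [s def_s] := mdvd_act_fix_sub q.
pose dk := (\det M)^-1 ^+ k.
have : (c%:MP * q) * l ^+ k = (dk%:MP * (q + s * l)) * l ^+ k.
  rewrite -mulrA mul_mpolyC -def_p -semi_p def_p rmorphM rmorphXn /=.
  rewrite act_poly_fix_lin exprZn -scalerAr -mul_mpolyC.
  by rewrite -[act_poly M q](subrK q) def_s; ring.
move/(mulIf (expf_neq0 k nz_l)) => eq_q.
have nz_cdk : c - dk != 0 by rewrite subr_eq0 eq_sym.
exists (((c - dk)^-1 * dk)%:MP * s); rewrite def_p exprS.
have : (c - dk)%:MP * q = dk%:MP * (s * l) by rewrite rmorphB /= mulrBl eq_q; ring.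
move/(congr1 (fun x => (c - dk)^-1%:MP * x)).
rewrite [X in X = _]mulrA -rmorphM /= mulVf // mpolyC1 mul1r => ->.
by rewrite rmorphM /=; ring.
Qed.

End FixingAHyperplane.

Section InvariantForms.
Variables (F : fieldType) (n : nat).
Implicit Types (w : form1 F n) (x : 'rV[F]_n).

(* the polynomial omega(x) obtained by evaluating a 1-form omega on the
   constant vector field x *)
Definition eval_form w x : {mpoly F[n]} := \sum_(i < n) w 0 i * (x 0 i)%:MP.

Fact eval_form_is_linear w : linear (eval_form w).
Proof.
move=> c x y; rewrite /eval_form scaler_sumr -big_split; apply: eq_bigr => i _.
by rewrite !mxE rmorphD rmorphM /= -mul_mpolyC; ring.
Qed.

HB.instance Definition _ w :=
  GRing.isLinear.Build F 'rV[F]_n {mpoly F[n]} _ (eval_form w)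
    (eval_form_is_linear w).

Lemma act_eval_form (M : 'M[F]_n) w x :
  M \in unitmx -> act_form M w = w ->
  act_poly M (eval_form w x) = eval_form w (x *m M).
Proof.
move=> unit_M inv_w.
have w_j j : w 0 j = \sum_(i < n) act_poly M (w 0 i) * (invmx M j i)%:MP.
  by rewrite -{1}inv_w mxE.
rewrite /eval_form rmorph_sum /=.
under [RHS]eq_bigr => j _ do rewrite w_j mulr_suml.
rewrite exchange_big /=; apply: eq_bigr => i _.
rewrite rmorphM /= act_polyC.
under eq_bigr => j _ do rewrite -mulrA -rmorphM /=.
rewrite -mulr_sumr -rmorph_sum /=; congr (_ * (_)%:MP).
have := congr1 (fun A : 'rV[F]_n => A 0 i) (mulmxK unit_M x).
by rewrite mxE => <-; apply: eq_bigr => j _; rewrite mulrC.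
Qed.

Variable omega : 'I_n -> form1 F n.

Lemma act_wedge_coef (M : 'M[F]_n) :
  M \in unitmx -> (forall k, act_form M (omega k) = omega k) ->
  act_poly M (wedge_coef omega) = \det M *: wedge_coef omega.
Proof.
move=> unit_M inv_omega; pose W := \matrix_(k < n, i < n) omega k 0 i.
have W_act : W = map_mx (act_poly M) W *m (map_mx (@mpolyC n F) (invmx M))^T.
  apply/matrixP => k j; rewrite !mxE -{1}[omega k]inv_omega mxE.
  by apply: eq_bigr => i _; rewrite !mxE.
have := congr1 determinant W_act; rewrite det_mulmx det_tr.
rewrite (det_map_mx (act_poly M)) (det_map_mx (@mpolyC n F)) det_inv.
rewrite /wedge_coef -/W => /(congr1 (fun p => (\det M)%:MP * p)).
rewrite mul_mpolyC => ->.
by rewrite mulrCA -rmorphM /= divff ?mulr1 // det_unitmx_neq0.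
Qed.

Lemma det_eval_forms (E : 'M[F]_n) :
  \det (\matrix_(k, j) eval_form (omega k) (row j E))
    = wedge_coef omega * (\det E)%:MP.
Proof.
rewrite /wedge_coef -(det_map_mx (@mpolyC n F)) -[\det (map_mx _ E)]det_tr -det_mulmx.
by congr (\det _); apply/matrixP => k j; rewrite !mxE; apply: eq_bigr => i _; rewrite !mxE.
Qed.

End InvariantForms.

Lemma mdvd_det_cols (F : fieldType) (n : nat) (A : 'M[{mpoly F[n]}]_n)
    (d : {mpoly F[n]}) (b : nat) :
  (b <= n)%N -> (forall k (j : 'I_n), (j < b)%N -> mdvd d (A k j)) ->
  mdvd (d ^+ b) (\det A).
Proof.
move=> le_bn dvd_A.
have /fin_all_exists[r def_A] : forall kj : 'I_n * 'I_n,
    exists r, (kj.2 < b)%N -> A kj.1 kj.2 = r * d.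
  move=> [k j] /=; have [lt_jb | _] := ltnP j b; last by exists 0.
  by have [r ->] := dvd_A k j lt_jb; exists r.
pose D := \row_(j < n) (if (j < b)%N then d else 1).
have -> : A = (\matrix_(k, j) if (j < b)%N then r (k, j) else A k j) *m diag_mx D.
  apply/matrixP => k j; rewrite mul_mx_diag !mxE.
  by case: ifP => [/(def_A (k, j))|]; rewrite ?mulr1.
rewrite det_mulmx det_diag (eq_bigr (fun j : 'I_n => if (j < b)%N then d else 1)).
  by rewrite -big_mkcond (big_ord_narrow le_bn) big_const_ord iter_mulr_1; eexists.
by move=> j _; rewrite mxE.
Qed.

Lemma undup_map_size (T T1 T2 : eqType) (s : seq T) (f : T -> T1) (g : T -> T2) :
  {in s &, forall x y, (f x == f y) = (g x == g y)} ->
  size (undup (map f s)) = size (undup (map g s)).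
Proof.
elim: s => [|x s IHs] //= eq_fg.
have mem_fg : (f x \in map f s) = (g x \in map g s).
  apply/mapP/mapP => -[y s_y /eqP].
    by rewrite eq_fg ?inE ?s_y ?eqxx ?orbT // => /eqP->; exists y.
  by rewrite -eq_fg ?inE ?s_y ?eqxx ?orbT // => /eqP->; exists y.
have {}IHs : size (undup (map f s)) = size (undup (map g s)).
  by apply: IHs => y z s_y s_z; apply: eq_fg; rewrite inE ?s_y ?s_z orbT.
by rewrite mem_fg; case: (g x \in map g s) => /=; rewrite IHs.
Qed.

Section PointwiseStabilizer.
Variables (F : fieldType) (n : nat) (gT : finGroupType) (G : {group gT})
  (rG : mx_representation F G n) (H : 'M[F]_n).
Local Notation GH := (ptstab rG H).
Local Notation KH := (ptstab_det1 rG H).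
Local Notation e := (e_H rG H).

Lemma ptstabP g : reflect (g \in G /\ H *m rG g = H) (g \in GH).
Proof. by rewrite inE; apply: (iffP andP) => -[G_g /eqP]. Qed.

Lemma ptstab_group_set : group_set GH.
Proof.
apply/group_setP; split=> [|g h /ptstabP[G_g fix_g] /ptstabP[G_h fix_h]].
  by apply/ptstabP; rewrite repr_mx1 mulmx1 group1.
by apply/ptstabP; rewrite groupM // repr_mxM // mulmxA fix_g fix_h.
Qed.

Canonical ptstab_group := group ptstab_group_set.

Lemma ptstab_sub : GH \subset G.
Proof. by apply/subsetP => g /ptstabP[]. Qed.

Lemma det_ptstab_neq0 g : g \in GH -> \det (rG g) != 0.
Proof.
by move/(subsetP ptstab_sub)/(repr_mx_unit rG)/det_unitmx_neq0.
Qed.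

Lemma rcoset_ptstab_det1 x : x \in GH ->
  (KH :* x)%g = [set z in GH | \det (rG z) == \det (rG x)].
Proof.
move=> GH_x; apply/setP => z; rewrite mem_rcoset [in LHS]inE [in RHS]inE.
have G_x := subsetP ptstab_sub x GH_x.
rewrite (groupMr _ (groupVr GH_x)); apply: andb_id2l => GH_z.
have G_z : z \in G := subsetP ptstab_sub z GH_z.
rewrite repr_mxM ?groupV // repr_mxV // det_mulmx det_inv.
rewrite -[_ * _^-1 == 1](inj_eq (mulIf (det_ptstab_neq0 GH_x))).
by rewrite mulfVK ?mul1r ?det_ptstab_neq0.
Qed.

Definition detvals : seq F := undup [seq \det (rG g) | g <- enum GH].

Lemma detvalsP c : reflect (exists2 g, g \in GH & c = \det (rG g)) (c \in detvals).
Proof.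
rewrite mem_undup; apply: (iffP mapP) => -[g GH_g ->]; exists g => //.
  by rewrite -mem_enum.
by rewrite mem_enum.
Qed.

Lemma size_detvals : size detvals = e.
Proof.
rewrite /e_H /indexg /rcosets imset_card.
rewrite -(eq_card (mem_undup _)) (card_uniqP (undup_uniq _)) /detvals.
apply: undup_map_size => x y; rewrite !mem_enum => GH_x GH_y.
rewrite /= !rcosetE !rcoset_ptstab_det1 //; apply/eqP/eqP => [->|eq_S] //.
have : x \in [set z in GH | \det (rG z) == \det (rG y)] by rewrite -eq_S inE GH_x eqxx.
by rewrite inE => /andP[_ /eqP].
Qed.

Lemma e_H_gt0 : (0 < e)%N.
Proof.
rewrite -size_detvals; have : 1 \in detvals by apply/detvalsP; exists 1%g; rewrite ?repr_mx1 ?det1.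
by case: detvals.
Qed.

(* multiplication by any value of det permutes detvals, so by comparing
   products every such value is an e-th root of unity *)
Lemma detvals_expe c : c \in detvals -> c ^+ e = 1.
Proof.
case/detvalsP => g GH_g ->; set x := \det (rG g).
have nz_x : x != 0 by apply: det_ptstab_neq0.
have uniq_xd : uniq (map ( *%R x) detvals).
  by rewrite map_inj_uniq ?undup_uniq //; apply: mulfI.
have xd_sub : {subset map ( *%R x) detvals <= detvals}.
  move=> _ /mapP[_ /detvalsP[h GH_h ->] ->]; apply/detvalsP.
  exists (g * h)%g; first exact: groupM.
  by rewrite repr_mxM ?det_mulmx // (subsetP ptstab_sub).
have [_ eq_xd] := uniq_min_size uniq_xd xd_sub (eq_leq (esym (size_map _ _))).
have := perm_big _ (uniq_perm uniq_xd (undup_uniq _) eq_xd)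
  (op := *%R) (x := 1) (P := xpredT) (F := id).
rewrite big_map big_split /= big_const_seq count_predT iter_mulr_1 size_detvals.
rewrite -[X in _ = X]mul1r => /mulIf; apply.
rewrite prodf_seq_neq0; apply/allP => _ /detvalsP[h GH_h ->].
exact: det_ptstab_neq0.
Qed.

Lemma exists_det_expN1 m : ~~ (e %| m)%N ->
  exists2 g, g \in GH & \det (rG g) ^+ m != 1.
Proof.
move=> ndvd_em; apply/exists_inP; apply: contraR ndvd_em.
rewrite negb_exists_in => /forall_inP det_m.
have root_mod c : c \in detvals -> c ^+ (m %% e) = 1.
  move=> d_c; have /detvalsP[g GH_g def_c] := d_c.
  have /negPn/eqP := det_m g GH_g; rewrite -def_c.
  by rewrite {1}(divn_eq m e) exprD mulnC exprM detvals_expe // expr1n mul1r.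
rewrite /dvdn; apply: contraT; rewrite -lt0n => mod_gt0.
have nz_p : 'X^(m %% e) - 1 != 0 :> {poly F}.
  by rewrite -size_poly_eq0 size_XnsubC.
have roots_p : all (root ('X^(m %% e) - 1)) detvals.
  by apply/allP => c d_c; rewrite rootE !hornerE root_mod ?subrr.
have := max_poly_roots nz_p roots_p (undup_uniq _).
by rewrite size_XnsubC // ltnS leqNgt size_detvals ltn_mod e_H_gt0.
Qed.

End PointwiseStabilizer.

Section LocalExponent.
Variables (F : fieldType) (n : nat) (gT : finGroupType) (G : {group gT})
  (rG : mx_representation F G n) (H : 'M[F]_n) (u : 'cV[F]_n)
  (omega : 'I_n -> form1 F n).
Hypotheses (ker_u : (kermx u == H)%MS) (nz_u : u != 0)
  (inv_omega : forall k g, g \in G -> act_form (rG g) (omega k) = omega k).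
Local Notation GH := (ptstab rG H).
Local Notation l := (lin_poly u).
Local Notation e := (e_H rG H).

Lemma unit_ptstab g : g \in GH -> rG g \in unitmx.
Proof. by move/(subsetP (ptstab_sub rG H)); apply: repr_mx_unit. Qed.

Lemma fix_ptstab g : g \in GH -> (kermx u <= kermx (rG g - 1%:M))%MS.
Proof.
case/ptstabP => _ fix_g; apply: submx_trans (proj1 (andP ker_u)) _.
by apply/sub_kermxP; rewrite mulmxBr mulmx1 fix_g subrr.
Qed.

Lemma mdvd_invariant_exp p :
  (forall g, g \in GH -> act_poly (rG g) p = p) -> mdvd l p -> mdvd (l ^+ e) p.
Proof.
move=> inv_p dvd_p.
apply: (nat_ind_between (P := fun k => mdvd (l ^+ k) p) (e_H_gt0 rG H)) => /=.
  by rewrite expr1.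
move=> k /andP[k_gt0 lt_ke] dvd_k; have : ~~ (e %| k)%N.
  by apply: contraTN lt_ke => /(dvdn_leq k_gt0); rewrite leqNgt.
case/exists_det_expN1 => g GH_g det_k.
apply: (mdvd_exp_semi_invariant (c := 1) (unit_ptstab GH_g) nz_u (fix_ptstab GH_g) _ dvd_k).
  by rewrite scale1r inv_p.
by rewrite exprVn invr_eq1.
Qed.

(* A row y of g - 1 for a transvection g lies in the hyperplane, so omega(y)
   is G_H-invariant; it is also g(omega(e_i)) - omega(e_i), hence divisible by l. *)
Lemma mdvd_eval_transvection g i k : g \in GH -> is_transvection (rG g) ->
  mdvd (l ^+ e) (eval_form (omega k) (row i (rG g - 1%:M))).
Proof.
move=> GH_g trans_g; have G_g := subsetP (ptstab_sub rG H) g GH_g.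
have yu : row i (rG g - 1%:M) *m u = 0.
  by rewrite -row_mul (transvection_mul_col nz_u (fix_ptstab GH_g) trans_g) row0.
apply: mdvd_invariant_exp => [h GH_h|].
  have G_h := subsetP (ptstab_sub rG H) h GH_h.
  rewrite (act_eval_form _ (unit_ptstab GH_h) (inv_omega k G_h)).
  have [w def_h] := kermx_col_factor nz_u (fix_ptstab GH_h).
  by rewrite -[rG h](subrK 1%:M) def_h mulmxDr mulmx1 mulmxA yu mul0mx add0r.
rewrite rowE mulmxBr mulmx1 linearB /=.
rewrite -(act_eval_form _ (unit_ptstab GH_g) (inv_omega k G_g)).
exact: mdvd_act_fix_sub (unit_ptstab GH_g) nz_u (fix_ptstab GH_g) _.
Qed.

Definition transvection_span : 'M[F]_n :=
  (\sum_(g in GH | is_transvection (rG g)) (rG g - 1%:M))%MS.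

Lemma mdvd_eval_transvection_span y k : (y <= transvection_span)%MS ->
  mdvd (l ^+ e) (eval_form (omega k) y).
Proof.
case/sub_sumsmxP => v ->; rewrite linear_sum; apply: mdvd_sum => g /andP[GH_g trans_g].
rewrite mulmx_sum_row linear_sum; apply: mdvd_sum => i _.
by rewrite linearZ; apply/mdvdZ/mdvd_eval_transvection.
Qed.

Lemma mdvd_wedge_coef_local : mdvd (l ^+ (e * b_H rG H + e.-1)) (wedge_coef omega).
Proof.
rewrite /b_H -/transvection_span; set b := \rank _.
pose E := row_ebase transvection_span.
have nz_detE : \det E != 0 by apply/det_unitmx_neq0/row_ebase_unit.
have dvd_eb : mdvd (l ^+ (e * b)) (wedge_coef omega).
  have [r def_r] : mdvd ((l ^+ e) ^+ b) (wedge_coef omega * (\det E)%:MP).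
    rewrite -det_eval_forms; apply: mdvd_det_cols (rank_leq_col _) _ => k j lt_jb.
    by rewrite mxE; apply/mdvd_eval_transvection_span/row_ebase_sub.
  exists (r * (\det E)^-1%:MP).
  have -> : wedge_coef omega = wedge_coef omega * (\det E)%:MP * (\det E)^-1%:MP.
    by rewrite -mulrA -rmorphM /= divff // mpolyC1 mulr1.
  by rewrite def_r exprM mulrAC.
apply: (nat_ind_between (P := fun k => mdvd (l ^+ k) (wedge_coef omega))
          (leq_addr _ _) dvd_eb).
move=> k /andP[le_ebk lt_k] dvd_k; have e_gt0 := e_H_gt0 rG H.
have : ~~ (e %| k.+1)%N.
  rewrite -(subnKC le_ebk) -addnS dvdn_addr ?dvdn_mulr //.
  apply/negP => /(dvdn_leq (ltn0Sn _)).
  by move: lt_k le_ebk e_gt0; set x := (e * b)%N; lia.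
case/exists_det_expN1 => g GH_g det_k1.
have inv_g k' := inv_omega k' (subsetP (ptstab_sub rG H) g GH_g).
apply: (mdvd_exp_semi_invariant (unit_ptstab GH_g) nz_u (fix_ptstab GH_g)
          (act_wedge_coef (unit_ptstab GH_g) inv_g) dvd_k).
apply: contra det_k1 => /eqP det_k.
by rewrite exprSr -[X in _ * X]det_k exprVn mulfV // expf_neq0 // (det_ptstab_neq0 GH_g).
Qed.

End LocalExponent.

Section Hyperplanes.
Variables (F : fieldType) (n : nat) (gT : finGroupType) (G : {group gT})
  (rG : mx_representation F G n) (l : 'M[F]_n -> 'cV[F]_n).
Hypothesis ker_l : forall H, H \in hyperplanes rG -> (kermx (l H) == H)%MS.

Lemma hyperplanesP H : H \in hyperplanes rG ->
  exists2 g, g \in reflections rG & H = <<fixspace (rG g)>>%MS.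
Proof. by rewrite mem_undup => /mapP[g]; rewrite mem_enum; exists g. Qed.

Lemma lin_hyperplane_neq0 H : H \in hyperplanes rG -> l H != 0.
Proof.
move=> hyp_H; have [g refl_g def_H] := hyperplanesP hyp_H.
have rank_g : \rank (rG g - 1%:M) = 1%N by move: refl_g; rewrite inE => /andP[_ /eqP].
have n_gt0 : (0 < n)%N by rewrite -rank_g rank_leq_row.
apply/eqP => lH0; have := eqmx_rank (ker_l hyp_H).
by rewrite lH0 kermx0 mxrank1 def_H genmxE /fixspace mxrank_ker rank_g; lia.
Qed.

Lemma lin_hyperplane_nonprop H H' :
  H \in hyperplanes rG -> H' \in hyperplanes rG -> H != H' ->
  forall c, l H' != c *: l H.
Proof.
move=> hyp_H hyp_H' neq_HH' c; apply: contraNneq neq_HH' => def_lH'.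
have nz_c : c != 0.
  by apply: contraNneq (lin_hyperplane_neq0 hyp_H') => c0; rewrite def_lH' c0 scale0r.
have def_lH : l H = c^-1 *: l H' by rewrite def_lH' scalerA mulVf // scale1r.
have sub_HH' : (H <= H')%MS.
  apply: submx_trans (proj2 (andP (ker_l hyp_H))) _.
  by apply: submx_trans (proj1 (andP (ker_l hyp_H'))); rewrite def_lH' kermx_scale.
have sub_H'H : (H' <= H)%MS.
  apply: submx_trans (proj2 (andP (ker_l hyp_H'))) _.
  by apply: submx_trans (proj1 (andP (ker_l hyp_H))); rewrite def_lH kermx_scale.
have [g _ def_H] := hyperplanesP hyp_H; have [g' _ def_H'] := hyperplanesP hyp_H'.
have /genmxP : (H == H')%MS by rewrite sub_HH'.
by rewrite def_H def_H' !genmx_id => ->.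
Qed.

End Hyperplanes.

Set Strict Implicit.
Unset Implicit Arguments.

Theorem lemma4p2 (F : fieldType) (n : nat) (gT : finGroupType)
    (G : {group gT}) (rG : mx_representation F G n)
    (l : 'M[F]_n -> 'cV[F]_n) (omega : 'I_n -> form1 F n) :
  (2 \notin [pchar F])%N ->
  mx_faithful rG ->
  (G :=: <<reflections rG>>)%g ->
  (forall H, H \in hyperplanes rG -> (kermx (l H) == H)%MS) ->
  (forall k g, g \in G -> act_form (rG g) (omega k) = omega k) ->
  mdvd (Q_tA rG l * Q_det rG l) (wedge_coef omega).
Proof.
move=> _ _ _ ker_l inv_omega.
rewrite /Q_tA /Q_det -big_split /=.
under eq_bigr => H _ do rewrite -exprD.
apply: mdvd_prod_lin_exp; first exact: undup_uniq.
- exact: lin_hyperplane_neq0.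
- exact: lin_hyperplane_nonprop.
- move=> H hyp_H; apply: mdvd_wedge_coef_local => //; first exact: ker_l.
  exact: lin_hyperplane_neq0 hyp_H.
Qed.
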